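(* Let $X$ be a well-ordered set, $\Omega=\{P\}$ with $P$ unary, $\lambda\in K$, and equip $\mathfrak{S}(X)$ with the order $(1)$. Then $$S=\{P(x)P(y)-P(P(x)y)-P(xP(y))-\lambda P(xy)\mid x,y\in\mathfrak{S}(X)\}$$ is a Gröbner–Shirshov basis in $K\langle X;P\rangle$.
   Context: General setup. $K$ is a commutative ring with unit, $X$ a set, and $\Omega=\bigcup_{n\ge1}\Omega_n$ a set of operation symbols, $\Omega_n$ being the $n$-ary ones. For a set $A$ let $\Omega(A)=\{\delta(u_1,\dots,u_t)\mid t\ge1,\ \delta\in\Omega_t,\ u_i\in A\}$. $S(Y)$ is the free semigroup and $Y^*$ the free monoid on $Y$. $\mathfrak{S}_0=S(X)$, $\mathfrak{S}_n=S(X\cup\Omega(\mathfrak{S}_{n-1}))$, $\mathfrak{S}(X)=\bigcup_n\mathfrak{S}_n$ ($\Omega$-words); the depth $dep(u)$ is the least $n$ with $u\in\mathfrak{S}_n$. $K\langle X;\Omega\rangle$ is the free $K$-module on $\mathfrak{S}(X)$ with concatenation product and multilinearly extended operators (free associative algebra with operators $\Omega$); here $K\langle X;P\rangle$ denotes it for $\Omega=\{P\}$. Prime $\Omega$-words are elements of $X\cup\Omega(\mathfrak{S}(X))$; $bre(u)$ is the number of prime factors of $u$. $\mathfrak{S}^\star(X)$ is the set of elements of $\mathfrak{S}(X\cup\{\star\})$ with exactly one $\star$, and $u|_s$ is substitution of $s$ for $\star$. Monomial ordering: well order on $\mathfrak{S}(X)$ with $w>v\Rightarrow u|_w>u|_v$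 for $u\in\mathfrak{S}^\star(X)$. $\bar f$ = leading word; monic = leading coefficient $1$. Compositions of monic $f,g$: intersection $(f,g)_w=fa-bg$ when $w=\bar fa=b\bar g$, $a,b\in\mathfrak{S}(X)$, $bre(w)<bre(\bar f)+bre(\bar g)$; including $(f,g)_w=f-u|_g$ when $w=\bar f=u|_{\bar g}$, $u\in\mathfrak{S}^\star(X)$. $p\equiv q\ \mathrm{mod}(S,w)$ means $p-q=\sum\alpha_iu_i|_{s_i}$ with $s_i\in S$, $u_i\in\mathfrak{S}^\star(X)$, $u_i|_{\overline{s_i}}<w$. $S$ is a Gröbner–Shirshov basis if all compositions of elements of $S$ are $\equiv0\ \mathrm{mod}(S,w)$. Order (1): Let $X$ and $\Omega$ be well ordered and order $X^*$ by deg-lex (first by length, then lexicographically). Each $u\in\mathfrak{S}(X)$ is uniquely written $u=u_0\,\delta_1(\overrightarrow{x_1})\,u_1\cdots\delta_t(\overrightarrow{x_t})\,u_t$ with $t\ge0$, $u_i\in X^*$, $\delta_k\in\Omega_{i_k}$, $\overrightarrow{x_k}\in\mathfrak{S}(X)^{i_k}$. Set $wt(u)=(t,\delta_1,\overrightarrow{x_1},\dots,\delta_t,\overrightarrow{x_t},u_0,\dots,u_t)$, and define $u>v$ iff $wt(u)>wt(v)$ lexicographically, where integers are compared as usual, operators by the order of $\Omega$, words of $X^*$ by deg-lex, and tuples of $\Omega$-words lexicographically using the order being defined (by induction on $dep(u)+dep(v)$). *)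

From HB Require Import structures.
From mathcomp Require Import all_boot all_order all_algebra.
Set Implicit Arguments. Unset Strict Implicit. Unset Printing Implicit Defensive.
Import Order.TTheory GRing.Theory.
Local Open Scope ring_scope.

(* An Omega-word (element of the free semigroup S(X u Omega(...))) is a     *)
(* NONEMPTY sequence of prime words; nonemptiness is imposed by the         *)
(* validity predicate [word_valid].                                         *)

Inductive pw (A : Type) : Type :=
| PX of A
| PP of seq (pw A).
Arguments PX {A}.
Arguments PP {A}.

Definition word (A : Type) := seq (pw A).

Section PwEq.
Variable A : eqType.

Fixpoint pw_enc (p : pw A) : GenTree.tree A :=
  match p with
  | PX a => GenTree.Leaf a
  | PP s => GenTree.Node 0 (map pw_enc s)
  end.

Fixpoint pw_dec (t : GenTree.tree A) : option (pw A) :=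
  match t with
  | GenTree.Leaf a => Some (PX a)
  | GenTree.Node _ ts => Some (PP (pmap pw_dec ts))
  end.

Lemma pw_encK : pcancel pw_enc pw_dec.
Proof.
rewrite /pcancel; fix IH 1; case=> [a|s] //=; congr (Some (PP _)).
elim: s => [|p s IHs] //=.
by rewrite IH /= IHs.
Qed.

HB.instance Definition _ := Equality.copy (pw A) (pcan_type pw_encK).
End PwEq.

Section Words.
Variable A : Type.

Fixpoint pw_valid (p : pw A) : bool :=
  match p with
  | PX _ => true
  | PP s => ~~ nilp s && all pw_valid s
  end.

(* w is an element of S(X) (resp. of S(X u {star}) for A = option X) *)
Definition word_valid (w : word A) : bool := ~~ nilp w && all pw_valid w.

(* size used only as fuel for the recursive order *)
Fixpoint pw_size (p : pw A) : nat :=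
  match p with
  | PX _ => 1
  | PP s => (sumn (map pw_size s)).+1
  end.
Definition word_size (w : word A) : nat := sumn (map pw_size w).

Definition bre (w : word A) : nat := size w.
End Words.

(* u = u_0 P(x_1) u_1 ... P(x_t) u_t with u_i in X^*;                        *)
(* wt(u) = (t, P, x_1, ..., P, x_t, u_0, ..., u_t), compared                 *)
(* lexicographically (all operators equal P).                                *)

Section Order1.
Variables (d : Order.disp_t) (X : orderType d).

Definition tops (u : word X) : seq (word X) :=
  pmap (fun p => if p is PP s then Some s else None) u.

(* the segments u_0, ..., u_t (always t+1 of them) *)
Fixpoint segs (u : word X) : seq (seq X) :=
  match u with
  | [::] => [:: [::]]
  | PX x :: u' =>
      match segs u' with
      | h :: r => (x :: h) :: r
      | [::] => [:: [:: x]]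
      end
  | PP _ :: u' => [::] :: segs u'
  end.

Definition cmpX (x y : X) : comparison :=
  if (x < y)%O then Lt else if x == y then Eq else Gt.

Fixpoint lexcmp (T : Type) (f : T -> T -> comparison) (s t : seq T)
  : comparison :=
  match s, t with
  | [::], [::] => Eq
  | [::], _ => Lt
  | _, [::] => Gt
  | a :: s', b :: t' =>
      match f a b with
      | Eq => lexcmp f s' t'
      | c => c
      end
  end.

Definition deglex (s t : seq X) : comparison :=
  match Nat.compare (size s) (size t) with
  | Eq => lexcmp cmpX s t
  | c => c
  end.

Fixpoint wcmpn (n : nat) (u v : word X) : comparison :=
  match n with
  | 0 => Eq
  | n'.+1 =>
      match Nat.compare (size (tops u)) (size (tops v)) with
      | Eq =>
          match lexcmp (wcmpn n') (tops u) (tops v) with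
          | Eq => lexcmp deglex (segs u) (segs v)
          | c => c
          end
      | c => c
      end
  end.

(* fuel word_size u + word_size v exceeds dep(u) + dep(v), so wcmp is the
   order (1) defined by induction on dep(u) + dep(v) *)
Definition wcmp (u v : word X) : comparison :=
  wcmpn (word_size u + word_size v) u v.

Definition wlt (u v : word X) : bool :=
  if wcmp u v is Lt then true else false.
End Order1.

(* The free algebra K<X;P>: elements are finite formal K-linear combinations *)
(* of Omega-words, represented as lists; two lists denote the same element   *)
(* iff they have the same coefficient at every word ([peq]).                *)

Section FreeAlg.
Variables (d : Order.disp_t) (X : orderType d) (K : comNzRingType).

Definition poly := seq (K * word X).

Definition coef (f : poly) (w : word X) : K :=
  \sum_(a <- f) (if a.2 == w then a.1 else 0).

Definition peq (f g : poly) : Prop := forall w, coef f w = coef g w.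

Definition padd (f g : poly) : poly := f ++ g.
Definition pscale (c : K) (f : poly) : poly := [seq (c * a.1, a.2) | a <- f].
Definition psub (f g : poly) : poly := padd f (pscale (-1) g).
Definition pmul (f g : poly) : poly :=
  [seq (a.1 * b.1, a.2 ++ b.2) | a <- f, b <- g].
Definition pmono (w : word X) : poly := [:: (1, w)].
Definition pP (f : poly) : poly := [seq (a.1, [:: PP a.2]) | a <- f].

Definition is_lead (f : poly) (w : word X) : Prop :=
  coef f w != 0 /\ forall v, coef f v != 0 -> v = w \/ wlt v w.

Definition monic (f : poly) : Prop := exists w, is_lead f w /\ coef f w = 1.

(* star-words: elements of S(X u {star}) with exactly one star;
   the star is the letter [None]. *)
Fixpoint nstar (p : pw (option X)) : nat :=
  match p with
  | PX None => 1
  | PX (Some _) => 0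
  | PP s => sumn (map nstar s)
  end.

Definition starword (u : word (option X)) : bool :=
  word_valid u && (sumn (map nstar u) == 1%N).

Fixpoint substp (w : word X) (p : pw (option X)) : word X :=
  match p with
  | PX None => w
  | PX (Some x) => [:: PX x]
  | PP s => [:: PP (flatten (map (substp w) s))]
  end.
Definition subst (u : word (option X)) (w : word X) : word X :=
  flatten (map (substp w) u).

(* u|_s for a polynomial s (linear in s since u has exactly one star) *)
Definition psubst (u : word (option X)) (f : poly) : poly :=
  [seq (a.1, subst u a.2) | a <- f].

Definition congr_mod (S : poly -> Prop) (p q : poly) (w : word X) : Prop :=
  exists l : seq (K * word (option X) * poly),
    (forall e, e \in l ->
       [/\ starword e.1.2, S e.2 &
           exists sb, is_lead e.2 sb /\ wlt (subst e.1.2 sb) w]) /\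
    peq (psub p q)
        (flatten [seq pscale e.1.1 (psubst e.1.2 e.2) | e <- l]).

Definition GSbasis (S : poly -> Prop) : Prop :=
  (forall f, S f -> monic f) /\
  forall f g fb gb, S f -> S g -> is_lead f fb -> is_lead g gb ->
    (forall a b w : word X, word_valid a -> word_valid b ->
       w = fb ++ a -> w = b ++ gb -> (bre w < bre fb + bre gb)%N ->
       congr_mod S (psub (pmul f (pmono a)) (pmul (pmono b) g)) [::] w) /\
    (forall u : word (option X), starword u -> fb = subst u gb ->
       congr_mod S (psub f (psubst u g)) [::] fb).

Definition rb_rel (lambda : K) (x y : word X) : poly :=
  psub (psub (psub (pmul (pP (pmono x)) (pP (pmono y)))
                   (pP (pmul (pP (pmono x)) (pmono y))))
             (pP (pmul (pmono x) (pP (pmono y)))))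
       (pscale lambda (pP (pmul (pmono x) (pmono y)))).

Definition rbS (lambda : K) (f : poly) : Prop :=
  exists x y : word X, [/\ word_valid x, word_valid y & f = rb_rel lambda x y].
End FreeAlg.

(* The order (1) compares first the number of P's at the top level
   (= size (tops u)).  Every word of f(x, y) other than P(x)P(y) has a single
   top-level P, so P(x)P(y) is the leading word of f(x, y) and f(x, y) is
   monic.  The same count shows that replacing a subword with two top-level
   P's by one with a single top-level P, inside any word with one star,
   strictly decreases the word (wlt_subst_fewer_P).
   A leading word P(x)P(y) has two prime factors, so the only intersection
   composition lives on w = P(x)P(y)P(z), and an inclusion P(x)P(y) = u|_{P(x')P(y')}
   forces u = star or u = P(s)P(t).  In each case the composition is written
   explicitly as a K-combination of substituted relations whose leading
   words all have fewer top-level P's than w (or than u|_{P(x')P(y')}); the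
   required coefficient identity is checked by the ring tactic. *)
From Pilot Require Import Defs.
From HB Require Import structures.
From mathcomp Require Import all_boot all_order all_algebra ring.
From Stdlib Require List.
Set Implicit Arguments. Unset Strict Implicit. Unset Printing Implicit Defensive.
Import Order.TTheory GRing.Theory.

Local Notation stars u := (sumn (map (@nstar _ _) u)).

Lemma pw_ind_nested (A : Type) (P : pw A -> Prop) :
  (forall a, P (PX a)) -> (forall s, List.Forall P s -> P (PP s)) ->
  forall p, P p.
Proof.
move=> HX HP; fix IH 1; case=> [a|s]; first exact: HX.
apply: HP; elim: s => [|q s IHs]; first exact: List.Forall_nil.
exact: (List.Forall_cons _ (IH q) IHs).
Qed.

Section Words.
Variable A : Type.
Implicit Types u v : word A.

Lemma valid_cat u v : word_valid u -> word_valid v -> word_valid (u ++ v).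
Proof.
rewrite /word_valid all_cat => /andP[Hu ->] /andP[_ ->].
by case: u Hu.
Qed.

Lemma valid_P u : word_valid [:: PP u] = word_valid u.
Proof. by rewrite /word_valid /= andbT. Qed.

Lemma valid_Pcons u v : word_valid u -> word_valid v -> word_valid (PP u :: v).
Proof. by move=> Hu; apply: (@valid_cat [:: PP u]); rewrite valid_P. Qed.

Lemma valid_flatten (T : Type) (F : T -> word A) (s : seq T) :
  ~~ nilp s -> all (fun q => word_valid (F q)) s -> word_valid (flatten (map F s)).
Proof.
elim: s => //= q [|q' s] IHs _ /andP[Hq Hs]; first by rewrite cats0.
exact: valid_cat Hq (IHs isT Hs).
Qed.

Lemma word_size_cat u v : word_size (u ++ v) = word_size u + word_size v.
Proof. by rewrite /word_size map_cat sumn_cat. Qed.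

Lemma word_size_gt0 u : ~~ nilp u -> 0 < word_size u.
Proof. by case: u => //= p u _; case: p. Qed.
End Words.

Ltac valid_word :=
  repeat first [assumption | rewrite valid_P | apply: valid_Pcons | apply: valid_cat].

Section Substitution.
Variables (d : Order.disp_t) (X : orderType d).
Implicit Types (W a b x y z : word X) (s t u : word (option X)).

Lemma subst_cons (p : pw (option X)) s a : subst (p :: s) a = substp a p ++ subst s a.
Proof. by []. Qed.

Lemma subst_cat s t a : subst (s ++ t) a = subst s a ++ subst t a.
Proof. by rewrite /subst map_cat flatten_cat. Qed.

Lemma subst_star a : subst [:: PX None] a = a.
Proof. exact: cats0. Qed.

Lemma subst_P1 s a : subst [:: PP s] a = [:: PP (subst s a)].
Proof. exact: cats0. Qed.

Lemma subst_Pcons s t a : subst (PP s :: t) a = PP (subst s a) :: subst t a.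
Proof. by []. Qed.

Lemma substp_free a b p : nstar p = 0 -> substp a p = substp b p.
Proof.
elim/pw_ind_nested: p => [[x|]|s IH] //= H.
congr [:: PP _]; elim: s IH H => //= q s IHs /List.Forall_cons_iff[Hq Hs].
by move/eqP; rewrite addn_eq0 => /andP[/eqP/Hq -> /eqP/(IHs Hs) ->].
Qed.

Lemma subst_free a b s : stars s = 0 -> subst s a = subst s b.
Proof.
elim: s => //= q s IHs /eqP; rewrite addn_eq0 => /andP[/eqP Hq /eqP Hs].
by rewrite !subst_cons (substp_free a b Hq) IHs.
Qed.

Lemma word_size_subst a s : 0 < word_size a -> word_size s <= word_size (subst s a).
Proof.
move=> Ha; elim: s => //= p s IHs.
rewrite subst_cons word_size_cat /word_size /=; apply: leq_add => //.
elim/pw_ind_nested: p => [[x|]|r IH] //=.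
rewrite /word_size /= addn0 ltnS.
elim: r IH => //= q r IHr /List.Forall_cons_iff[Hq Hr].
by rewrite map_cat sumn_cat leq_add // IHr.
Qed.

Lemma substp_valid a p : word_valid a -> pw_valid p -> word_valid (substp a p).
Proof.
move=> Ha; elim/pw_ind_nested: p => [[x|]|s IH] //= /andP[Hn Hall].
rewrite valid_P; apply: valid_flatten => //.
elim: s IH {Hn} Hall => //= q s IHs /List.Forall_cons_iff[Hq Hs] /andP[vq vs].
by rewrite Hq // IHs.
Qed.

Lemma subst_valid a s : word_valid a -> word_valid s -> word_valid (subst s a).
Proof.
move=> Ha /andP[Hn Hall]; apply: valid_flatten => //.
by apply/allP => p /(allP Hall); apply: substp_valid.
Qed.

Fixpoint liftp (p : pw X) : pw (option X) :=
  match p with PX x => PX (Some x) | PP s => PP (map liftp s) end.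
Definition liftw (y : word X) : word (option X) := map liftp y.

Lemma liftp_spec a p :
  [/\ nstar (liftp p) = 0, substp a (liftp p) = [:: p] & pw_valid (liftp p) = pw_valid p].
Proof.
elim/pw_ind_nested: p => [x|s IH] //=; rewrite -/(subst _ a).
have [-> -> ->] : [/\ stars (map liftp s) = 0, subst (map liftp s) a = s &
    all (@pw_valid _) (map liftp s) = all (@pw_valid _) s].
  elim: s IH => //= q s IHs /List.Forall_cons_iff[[-> Hq ->] /IHs[-> Hs ->]].
  by rewrite subst_cons Hq /= Hs.
by rewrite /nilp size_map.
Qed.

Lemma liftw_spec a y :
  [/\ stars (liftw y) = 0, subst (liftw y) a = y & word_valid (liftw y) = word_valid y].
Proof.
split.
- by elim: y => //= p y ->; case: (liftp_spec a p) => ->.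
- by elim: y => //= p y IH; rewrite subst_cons IH; case: (liftp_spec a p) => _ ->.
- rewrite /word_valid /nilp size_map all_map; congr (_ && _).
  by apply: eq_all => p /=; case: (liftp_spec a p).
Qed.

Lemma subst_Pl z W : subst [:: PP (PX None :: liftw z)] W = [:: PP (W ++ z)].
Proof. by case: (liftw_spec W z) => _ Hz _; rewrite /subst /= -/(subst _ W) Hz. Qed.

Lemma subst_Pr x W : subst [:: PP (liftw x ++ [:: PX None])] W = [:: PP (x ++ W)].
Proof.
by case: (liftw_spec W x) => _ Hx _; rewrite /subst /= -/(subst _ W) subst_cat subst_star Hx.
Qed.

Lemma starword_Pl z : word_valid z -> starword [:: PP (PX None :: liftw z)].
Proof.
case: (liftw_spec [::] z) => Hs _ <- /andP[_ Hall].
by rewrite /starword /word_valid /= Hall Hs.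
Qed.

Lemma starword_Pr x : word_valid x -> starword [:: PP (liftw x ++ [:: PX None])].
Proof.
case: (liftw_spec [::] x) => Hs _ <- /andP[_ Hall].
by rewrite /starword /word_valid /= map_cat sumn_cat Hs all_cat Hall /nilp size_cat addn1.
Qed.

Lemma starword_PP s t : starword [:: PP s; PP t] ->
  [/\ word_valid s, word_valid t & stars [:: PP s; PP t] = 1].
Proof. by rewrite /starword /word_valid /= => /andP[/and3P[-> -> _] /eqP ->]. Qed.

Lemma starword_regroup s t : starword [:: PP s; PP t] ->
  [/\ starword [:: PP (PP s :: t)], starword [:: PP (s ++ [:: PP t])]
     & starword [:: PP (s ++ t)]].
Proof.
case/starword_PP=> Hs Ht /=; rewrite addn0 => Hst.
rewrite /starword !valid_P /= ?map_cat ?sumn_cat /= !addn0 Hst eqxx !andbT.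
by split; valid_word.
Qed.

Lemma overlap_PP_shape x y x' y' a b w : word_valid a -> word_valid b ->
  w = [:: PP x; PP y] ++ a -> w = b ++ [:: PP x'; PP y'] -> (bre w < 4)%N ->
  [/\ a = [:: PP y'], b = [:: PP x] & x' = y].
Proof.
move=> /andP[Ha _] /andP[Hb _] -> Hw; rewrite /bre size_cat /= !ltnS.
case: a Ha Hw => [//|a0 [|//]] _; case: b Hb => [//|b0 [|b1 b]] _ /=.
- by case=> -> -> ->.
- by move/(congr1 size)/eqP; rewrite /= size_cat addn2.
Qed.

Lemma subst_PP_shape x y x' y' u :
  [:: PP x; PP y] = subst u [:: PP x'; PP y'] ->
  (u = [:: PX None] /\ x = x' /\ y = y') \/
  exists s t, [/\ u = [:: PP s; PP t], x = subst s [:: PP x'; PP y']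
                & y = subst t [:: PP x'; PP y']].
Proof.
have nonnil r : subst r [:: PP x'; PP y'] = [::] -> r = [::].
  by case: r => // -[[]|] r.
case: u => [|[[c|]|s] u] //=.
- by case=> -> -> /esym/nonnil ->; left.
- case: u => [|[[c|]|t] u] //= [-> -> /esym/nonnil ->].
  by right; exists s, t.
Qed.
End Substitution.

Section Order1Facts.
Variables (d : Order.disp_t) (X : orderType d).
Implicit Types (u v a b : word X) (s : word (option X)).

Lemma lexcmp_refl (T : Type) (f : T -> T -> comparison) r :
  (forall c, f c c = Eq) -> lexcmp f r r = Eq.
Proof. by move=> H; elim: r => //= c r ->; rewrite H. Qed.

Lemma lexcmp_cat (T : Type) (f : T -> T -> comparison) p q q' :
  (forall c, f c c = Eq) -> lexcmp f (p ++ q) (p ++ q') = lexcmp f q q'.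
Proof. by move=> H; elim: p => //= c p ->; rewrite H. Qed.

Lemma deglex_refl (r : seq X) : deglex r r = Eq.
Proof.
rewrite /deglex PeanoNat.Nat.compare_refl lexcmp_refl // => x.
by rewrite /cmpX ltxx eqxx.
Qed.

Lemma wcmpn_refl n u : wcmpn n u u = Eq.
Proof.
elim: n u => //= n IH u.
by rewrite PeanoNat.Nat.compare_refl !lexcmp_refl //; apply: deglex_refl.
Qed.

Lemma tops_cat u v : tops (u ++ v) = tops u ++ tops v.
Proof. by rewrite /tops pmap_cat. Qed.

Lemma wcmpn_fewer_P n u v :
  size (tops u) < size (tops v) -> wcmpn n.+1 u v = Lt.
Proof. by move=> /ssrnat.ltP /PeanoNat.Nat.compare_lt_iff /= ->. Qed.

Lemma wcmp_fuel_succ u v :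
  ~~ nilp u || ~~ nilp v -> exists n, word_size u + word_size v = n.+1.
Proof.
move=> /orP[/word_size_gt0|/word_size_gt0] Hpos.
- by exists (word_size u + word_size v).-1; rewrite prednK // ltn_addr.
- by exists (word_size u + word_size v).-1; rewrite prednK // ltn_addl.
Qed.

Lemma wlt_fewer_P u v : size (tops u) < size (tops v) -> wlt u v.
Proof.
move=> Hlt; have [|n Hn] := @wcmp_fuel_succ u v.
  by case: v Hlt => [|p v]; rewrite ?ltn0 // orbT.
by rewrite /wlt /wcmp Hn wcmpn_fewer_P.
Qed.

Lemma wlt_more_P u v : size (tops v) < size (tops u) -> ~~ wlt u v.
Proof.
move=> Hlt; have [|n Hn] := @wcmp_fuel_succ u v; first by case: u Hlt.
by rewrite /wlt /wcmp Hn /= (proj2 (PeanoNat.Nat.compare_gt_iff _ _) (ssrnat.ltP Hlt)).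
Qed.

Section SubstMonotone.
Variables a b : word X.
Hypothesis fewer_P : size (tops a) < size (tops b).

Lemma subst_tops_lt n
  (IHn : forall r, stars r = 1 -> word_size r <= n ->
         wcmpn n (subst r a) (subst r b) = Lt) s :
  stars s = 1 -> word_size s <= n.+1 ->
  (size (tops (subst s a)) < size (tops (subst s b))) \/
  (size (tops (subst s a)) = size (tops (subst s b)) /\
   lexcmp (wcmpn n) (tops (subst s a)) (tops (subst s b)) = Lt).
Proof.
elim: s => //= p s IHs Hstars Hsize.
rewrite !subst_cons !tops_cat !size_cat.
have Hsize' : word_size s <= n.+1.
  by apply: leq_trans Hsize; rewrite /word_size /= leq_addl.
case Hp: (nstar p) Hstars => [|[|k]] //=.
- rewrite add0n (substp_free b a Hp) => /(IHs)/(_ Hsize') [Hlt|[Heq Hlex]].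
  + by left; rewrite ltn_add2l.
  + by right; rewrite Heq lexcmp_cat // => r; apply: wcmpn_refl.
- rewrite add1n => -[/(subst_free a b) ->].
  move: Hp Hsize; case: p => [[x|]|r] //= Hp Hsize; first by left; rewrite ltn_add2r.
  right; split=> //=; rewrite IHn //.
  by move: Hsize; rewrite /word_size /= addSn ltnS => /(leq_trans (leq_addr _ _)).
Qed.

Lemma wcmpn_subst_lt n s : stars s = 1 -> word_size s <= n ->
  wcmpn n (subst s a) (subst s b) = Lt.
Proof.
elim: n s => [|n IHn] s Hs Hsize.
  by case: s Hs Hsize => //= -[] //= s; rewrite /word_size.
case: (subst_tops_lt IHn Hs Hsize) => [Hlt|[Heq Hlex]].
- exact: wcmpn_fewer_P.
- by rewrite /= Heq PeanoNat.Nat.compare_refl Hlex.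
Qed.

Lemma wlt_subst_fewer_P s : stars s = 1 -> wlt (subst s a) (subst s b).
Proof.
move=> Hs; rewrite /wlt /wcmp wcmpn_subst_lt //.
have Hb : 0 < word_size b by apply: word_size_gt0; case: (b) fewer_P; rewrite ?ltn0.
exact: leq_trans (word_size_subst s Hb) (leq_addl _ _).
Qed.
End SubstMonotone.
End Order1Facts.

Local Open Scope ring_scope.

Arguments rb_rel : simpl never.
Arguments psubst : simpl never.
Arguments pscale : simpl never.
Arguments pmul : simpl never.
Arguments subst : simpl never.
Arguments psub : simpl never.
Arguments coef : simpl never.

Section Coefficients.
Variables (d : Order.disp_t) (X : orderType d) (K : comNzRingType).
Implicit Types (f g : Defs.poly X K) (w W x y : word X) (lam : K).

Definition ind (b : bool) : K := if b then 1 else 0.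
Arguments ind : simpl never.

Lemma coef_nil w : coef ([::] : Defs.poly X K) w = 0.
Proof. by rewrite /coef big_nil. Qed.

Lemma coef_cons c W f w : coef ((c, W) :: f) w = c * ind (W == w) + coef f w.
Proof. by rewrite /coef big_cons /ind /=; case: (W == w); rewrite ?mulr1 ?mulr0. Qed.

Lemma coef_cat f g w : coef (f ++ g) w = coef f w + coef g w.
Proof. by rewrite /coef big_cat. Qed.

Lemma coef_scale c f w : coef (pscale c f) w = c * coef f w.
Proof.
elim: f => [|[a W] f IH]; first by rewrite /pscale /= !coef_nil mulr0.
by rewrite /pscale /= !coef_cons -/(pscale c f) IH mulrDr mulrA.
Qed.

Lemma coef_sub f g w : coef (psub f g) w = coef f w - coef g w.
Proof. by rewrite /psub /padd coef_cat coef_scale mulN1r. Qed.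

Lemma coef_flatten (T : Type) (F : T -> Defs.poly X K) l w :
  coef (flatten (map F l)) w = \sum_(e <- l) coef (F e) w.
Proof.
elim: l => [|e l IH]; first by rewrite big_nil coef_nil.
by rewrite /= coef_cat IH big_cons.
Qed.

Lemma pmul_mono_r f a : pmul f (pmono K a) = [seq (e.1, e.2 ++ a) | e <- f].
Proof. by rewrite /pmul; elim: f => //= [[c W] f] IH; rewrite mulr1 IH. Qed.

Lemma pmul_mono_l f b : pmul (pmono K b) f = [seq (e.1, b ++ e.2) | e <- f].
Proof. by rewrite /pmul /= cats0; elim: f => //= [[c W] f] IH; rewrite mul1r IH. Qed.

Lemma coef_rb_map (phi : word X -> word X) lam x y w :
  coef [seq (e.1, phi e.2) | e <- rb_rel lam x y] w =
  ind (phi [:: PP x; PP y] == w) - ind (phi [:: PP (PP x :: y)] == w)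
  - ind (phi [:: PP (x ++ [:: PP y])] == w) - lam * ind (phi [:: PP (x ++ y)] == w).
Proof.
rewrite /rb_rel /psub /padd /pscale /pmul /pP /pmono /= !coef_cons coef_nil.
ring.
Qed.

Lemma coef_rb lam x y w : coef (rb_rel lam x y) w =
  ind ([:: PP x; PP y] == w) - ind ([:: PP (PP x :: y)] == w)
  - ind ([:: PP (x ++ [:: PP y])] == w) - lam * ind ([:: PP (x ++ y)] == w).
Proof. by rewrite -(coef_rb_map id) map_id_in // => -[]. Qed.

Lemma coef_rb_support lam x y v : coef (rb_rel lam x y) v != 0 ->
  v = [:: PP x; PP y] \/ size (tops v) = 1%N.
Proof.
rewrite coef_rb; have [<-|_] := eqVneq [:: PP x; PP y] v; first by left.
have [<-|_] := eqVneq [:: PP (PP x :: y)] v; first by right.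
have [<-|_] := eqVneq [:: PP (x ++ [:: PP y])] v; first by right.
have [<-|_] := eqVneq [:: PP (x ++ y)] v; first by right.
by rewrite /ind /= mulr0 !subr0 eqxx.
Qed.

Lemma coef_rb_lead lam x y : coef (rb_rel lam x y) [:: PP x; PP y] = 1.
Proof.
have single p : ([:: p] == [:: PP x; PP y]) = false.
  by apply/negbTE/eqP => /(congr1 size).
by rewrite coef_rb eqxx !single /ind mulr0 !subr0.
Qed.

Lemma lead_rb lam x y W : is_lead (rb_rel lam x y) W <-> W = [:: PP x; PP y].
Proof.
have lead_nz : coef (rb_rel lam x y) [:: PP x; PP y] != 0.
  by rewrite coef_rb_lead oner_neq0.
split=> [[HW Hmax]|->].
- case: (coef_rb_support HW) (Hmax _ lead_nz) => [-> //|HWtops] [-> //|].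
  by rewrite (negbTE (@wlt_more_P _ _ _ W _)) // HWtops.
- split=> // v /coef_rb_support [->|Hv]; first by left.
  by right; apply: wlt_fewer_P; rewrite Hv.
Qed.

Lemma rb_monic lam x y : Defs.monic (rb_rel lam x y).
Proof. by exists [:: PP x; PP y]; rewrite lead_rb coef_rb_lead. Qed.
End Coefficients.

Ltac entry_side :=
  rewrite ?subst_star ?subst_Pl ?subst_Pr //;
  first [by apply: wlt_fewer_P | apply: starword_Pl | apply: starword_Pr | idtac];
  valid_word.

Section Compositions.
Variables (d : Order.disp_t) (X : orderType d) (K : comNzRingType) (lam : K).
Implicit Types (w x y z : word X) (s t u : word (option X)).

Definition admissible w (e : K * word (option X) * Defs.poly X K) : Prop :=
  [/\ starword e.1.2, rbS lam e.2 &
      exists sb, is_lead e.2 sb /\ wlt (subst e.1.2 sb) w].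

Lemma admissible_rb w c u x y : starword u -> word_valid x -> word_valid y ->
  wlt (subst u [:: PP x; PP y]) w -> admissible w (c, u, rb_rel lam x y).
Proof.
move=> Hu Hx Hy Hlt; split=> //; first by exists x, y.
by exists [:: PP x; PP y]; rewrite lead_rb.
Qed.

Lemma congr_mod_by w p l : List.Forall (admissible w) l ->
  (forall v, coef p v = \sum_(e <- l) e.1.1 * coef (psubst e.1.2 e.2) v) ->
  congr_mod (rbS lam) p [::] w.
Proof.
move=> Hl Hcoef; exists l; split=> [|v].
- elim: l Hl {Hcoef} => // e l IH /List.Forall_cons_iff[He Hl] e'.
  by rewrite inE => /orP[/eqP -> //|]; apply: IH.
- rewrite coef_sub coef_nil subr0 coef_flatten Hcoef.
  by apply: eq_bigr => e _; rewrite coef_scale.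
Qed.

Lemma intersection_trivial x y z :
  word_valid x -> word_valid y -> word_valid z ->
  congr_mod (rbS lam)
    (psub (pmul (rb_rel lam x y) (pmono K [:: PP z]))
          (pmul (pmono K [:: PP x]) (rb_rel lam y z))) [::] [:: PP x; PP y; PP z].
Proof.
move=> Hx Hy Hz.
apply: (@congr_mod_by _ _
  [:: (-1, [:: PX None], rb_rel lam (PP x :: y) z);
      (-1, [:: PX None], rb_rel lam (x ++ [:: PP y]) z);
      (- lam, [:: PX None], rb_rel lam (x ++ y) z);
      (1, [:: PX None], rb_rel lam x (PP y :: z));
      (1, [:: PX None], rb_rel lam x (y ++ [:: PP z]));
      (lam, [:: PX None], rb_rel lam x (y ++ z));
      (1, [:: PP (PX None :: liftw z)], rb_rel lam x y);
      (-1, [:: PP (liftw x ++ [:: PX None])], rb_rel lam y z)]) => [|v].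
- repeat (apply: List.Forall_cons; [apply: admissible_rb; entry_side|]).
  exact: List.Forall_nil.
- rewrite coef_sub pmul_mono_r pmul_mono_l (coef_rb_map (cat^~ _)) (coef_rb_map (cat _)).
  rewrite !big_cons big_nil /= /psubst !coef_rb_map.
  rewrite !subst_star !subst_Pl !subst_Pr -!catA /=.
  ring.
Qed.

Lemma inclusion_star_trivial x y :
  congr_mod (rbS lam) (psub (rb_rel lam x y) (psubst [:: PX None] (rb_rel lam x y)))
    [::] [:: PP x; PP y].
Proof.
apply: (@congr_mod_by _ _ [::]) => // v.
by rewrite big_nil coef_sub coef_rb subrr.
Qed.

(* The inclusion composition for u = P(s)P(t), where the star lies in s or
   in t: with g = P(x')P(y'), u|_g = P(s|_g)P(t|_g).  The three lower words
   W of f(x', y') give the terms f(s|_W, t|_W), whose leading words u|_W are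
   below u|_g by monotonicity, and the terms P(P(s)t)|_{f(x', y')},
   P(sP(t))|_{f(x', y')}, P(st)|_{f(x', y')} with a single top-level P. *)
Lemma inclusion_trivial x' y' s t :
  word_valid x' -> word_valid y' -> starword [:: PP s; PP t] ->
  congr_mod (rbS lam)
    (psub (rb_rel lam (subst s [:: PP x'; PP y']) (subst t [:: PP x'; PP y']))
          (psubst [:: PP s; PP t] (rb_rel lam x' y'))) [::]
    [:: PP (subst s [:: PP x'; PP y']); PP (subst t [:: PP x'; PP y'])].
Proof.
move=> Hx' Hy' Hu; have [Hs Ht Hstars] := starword_PP Hu.
set g := [:: PP x'; PP y']; have Hg : word_valid g by valid_word.
have lower c W : (size (tops W) < 2)%N -> word_valid W ->
    admissible [:: PP (subst s g); PP (subst t g)]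
      (c, [:: PX None], rb_rel lam (subst s W) (subst t W)).
  move=> HW vW; apply: admissible_rb => //; try exact: subst_valid.
  by rewrite subst_star; exact: (@wlt_subst_fewer_P _ _ W g HW _ Hstars).
have upper c r : starword [:: PP r] ->
    admissible [:: PP (subst s g); PP (subst t g)] (c, [:: PP r], rb_rel lam x' y').
  by move=> Hr; apply: admissible_rb; rewrite // subst_P1; apply: wlt_fewer_P.
apply: (@congr_mod_by _ _
  [:: (1, [:: PX None], rb_rel lam (subst s [:: PP (PP x' :: y')]) (subst t [:: PP (PP x' :: y')]));
      (1, [:: PX None], rb_rel lam (subst s [:: PP (x' ++ [:: PP y'])])
                                   (subst t [:: PP (x' ++ [:: PP y'])]));
      (lam, [:: PX None], rb_rel lam (subst s [:: PP (x' ++ y')]) (subst t [:: PP (x' ++ y')]));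
      (-1, [:: PP (PP s :: t)], rb_rel lam x' y');
      (-1, [:: PP (s ++ [:: PP t])], rb_rel lam x' y');
      (- lam, [:: PP (s ++ t)], rb_rel lam x' y')]) => [|v].
- have [H1 H2 H3] := starword_regroup Hu.
  repeat (apply: List.Forall_cons; [first [apply: lower | apply: upper] => //; valid_word|]).
  exact: List.Forall_nil.
- rewrite coef_sub coef_rb !big_cons big_nil /= /psubst !coef_rb_map.
  rewrite !(subst_star, subst_P1, subst_Pcons, subst_cat) /=.
  ring.
Qed.
End Compositions.

Theorem theorem4p1 (d : Order.disp_t) (X : orderType d)
  (X_wo : well_founded (fun a b : X => (a < b)%O))
  (K : comNzRingType) (lambda : K) :
  @GSbasis d X K (@rbS d X K lambda).
Proof.
split=> [f [x [y [_ _ ->]]]|]; first exact: rb_monic.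
move=> f g fb gb [x [y [Hx Hy ->]]] [x' [y' [Hx' Hy' ->]]] /lead_rb -> /lead_rb ->.
split=> [a b w Ha Hb Hwa Hwb Hbre|u Hu].
- have [Ea Eb Ey] := overlap_PP_shape Ha Hb Hwa Hwb Hbre.
  by rewrite Hwa Ea Eb Ey; apply: intersection_trivial.
- case/subst_PP_shape=> [[-> [-> ->]]|[s [t [Eu -> ->]]]].
  + exact: inclusion_star_trivial.
  + by rewrite Eu in Hu *; apply: inclusion_trivial.
Qed.
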